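(* Let $\mathcal{G}=(\mathcal{V},\mathcal{E})$ be a graph, let $\epsilon>0$, $\Lambda>0$, $k>0$ and $\gamma\in(0,1)$, and let $\mathcal{Z}$ be a $k$-covering of $\mathcal{G}$ of size $Z$. Then there is an algorithm $\mathcal{A}$ that is $\epsilon$-differentially private on $\mathcal{G}$ such that for any $w:\mathcal{E}\to[0,\Lambda]$, with probability at least $1-\gamma$, $\mathcal{A}(w)$ releases all-pairs distances with approximation error $O\big(k\Lambda+Z^2\epsilon^{-1}\log(Z/\gamma)\big)$ per distance.
   Context: Private edge weight model: for a graph $\mathcal{G}=(\mathcal{V},\mathcal{E})$, a weight function is $w:\mathcal{E}\to\mathbb{R}^+$ (nonnegative reals). Two weight functions $w,w'$ are neighboring if $\sum_{e\in\mathcal{E}}|w(e)-w'(e)|\le 1$. A randomized algorithm $\mathcal{A}$ taking weight functions on $\mathcal{E}$ as input is $\epsilon$-differentially private on $\mathcal{G}$ if for all neighboring $w,w'$ and all sets $S$ of outputs, $\Pr[\mathcal{A}(w)\in S]\le e^{\epsilon}\Pr[\mathcal{A}(w')\in S]$. The weight of a path is the sum of the weights of its edges, and $d_w(x,y)$ is the minimum weight of a path from $x$ to $y$; the approximation error of a released distance for $(x,y)$ is the absolute difference between the released value and $d_w(x,y)$. A subset $\mathcal{Z}\subseteq\mathcal{V}$ is a $k$-covering if for every $v\in\mathcal{V}$ there is $z\in\mathcal{Z}$ joined to $v$ by a path with at most $k$ edges. The $O(\cdot)$ hides absolute constants. *)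

From HB Require Import structures.
From mathcomp Require Import all_boot all_order all_algebra.
From mathcomp Require Import all_classical all_reals all_analysis.
Set Implicit Arguments. Unset Strict Implicit. Unset Printing Implicit Defensive.
Import Order.TTheory GRing.Theory Num.Theory.
Local Open Scope classical_set_scope.
Local Open Scope ring_scope.

Section GraphDefs.
Variables (V E : finType) (ep : E -> V * V).
(* A graph (V, E): each edge e joins the two (undirected) endpoints ep e. *)

Inductive walk : V -> V -> seq E -> Prop :=
| walk_nil x : walk x x [::]
| walk_cons x y z e p :
    (ep e = (x, z) \/ ep e = (z, x)) -> walk z y p -> walk x y (e :: p).

Definition gconnected (x y : V) : Prop := exists p, walk x y p.

Definition k_covering (k : nat) (Z : {set V}) : Prop :=
  forall v : V, exists2 z, z \in Z & exists p, walk z v p /\ (size p <= k)%N.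

Variable R : realType.

Definition path_weight (w : E -> R) (p : seq E) : R := \sum_(e <- p) w e.

Definition wdist (w : E -> R) (x y : V) : R :=
  inf [set path_weight w p | p in [set p | walk x y p]].

Definition nonneg_weight (w : E -> R) : Prop := forall e, 0 <= w e.

Definition neighboring (w w' : E -> R) : Prop :=
  \sum_(e : E) `|w e - w' e| <= 1.

Definition cylinder : set (set (V -> V -> R)) :=
  [set S | exists x y (B : set R), measurable B /\ S = [set f | B (f x y)]].

Definition out_measurable (S : set (V -> V -> R)) : Prop := <<s cylinder >> S.

(* A randomized algorithm: randomness from a probability space (Omega, P);
   A w omega is the output on input weights w. It is a random variable for
   each w (each released coordinate is measurable). *)
Definition is_random_alg (d : measure_display) (Omega : measurableType d)
  (A : (E -> R) -> Omega -> V -> V -> R) : Prop :=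
  forall w x y, measurable_fun setT (fun om => A w om x y).

Definition edge_DP (d : measure_display) (Omega : measurableType d)
  (P : probability Omega R) (A : (E -> R) -> Omega -> V -> V -> R) (eps : R) : Prop :=
  forall w w' : E -> R, nonneg_weight w -> nonneg_weight w' -> neighboring w w' ->
  forall S, out_measurable S ->
    (P (A w @^-1` S) <= (expR eps)%:E * P (A w' @^-1` S))%E.

End GraphDefs.

From HB Require Import structures.
From mathcomp Require Import all_boot all_order all_algebra.
From mathcomp Require Import all_classical all_reals all_analysis.
From mathcomp Require Import ring lra zify.
Import Order.TTheory GRing.Theory Num.Theory.
Local Open Scope classical_set_scope.
Local Open Scope ring_scope.
Set Implicit Arguments. Unset Strict Implicit. Unset Printing Implicit Defensive.

(* Every vertex lies within [k] edges of a centre in [Z], so the distance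
   between the centres of [x] and [y] is within [2 k Lambda] of [d_w(x, y)].
   Only the [|Z|^2] centre-to-centre distances are released; each has
   sensitivity [1] for neighbouring weights.  They are rounded down to a grid
   of step [q <= min (k Lambda) 1] and perturbed by a discrete Laplace noise
   of rate [eps / (|Z|^2 (1/q + 1))] on a cycle long enough to hold every
   distance, so that translating the noise is a bijection and the mechanism
   is [eps]-private.  The noise has geometric tails: by a union bound over
   the [|Z|^2] coordinates, with probability [1 - gamma] every coordinate
   moves by at most [t] steps, where [q t = O(q + |Z|^2 eps^-1 log (|Z| / gamma))]. *)

Section Walks.
Variables (V E : finType) (ep : E -> V * V).

Lemma walk_cat x y z p q : walk ep x y p -> walk ep y z q -> walk ep x z (p ++ q).
Proof. by elim=> // a b c e p' He _ IH /IH; exact: walk_cons. Qed.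

Lemma walk_rev x y p : walk ep x y p -> walk ep y x (rev p).
Proof.
elim=> [a|a b c e p' He _ IH]; first exact: walk_nil.
rewrite rev_cons -cats1; apply: walk_cat IH (walk_cons _ (walk_nil _ _)).
by case: He => ->; [right|left].
Qed.

Lemma walk_cons_inv x y e p : walk ep x y (e :: p) ->
  exists z, (ep e = (x, z) \/ ep e = (z, x)) /\ walk ep z y p.
Proof. by move=> H; inversion H; subst; eauto. Qed.

Lemma walk_cat_inv x y p e q : walk ep x y (p ++ e :: q) ->
  exists u v, [/\ ep e = (u, v) \/ ep e = (v, u), walk ep x u p & walk ep v y q].
Proof.
elim: p x => [|a p IH] x /= /walk_cons_inv [z [Hez Hz]].
  by exists x, z; split=> //; exact: walk_nil.
have [u [v [Huv Hu Hv]]] := IH _ Hz.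
by exists u, v; split=> //; exact: walk_cons Hez Hu.
Qed.

(* Loop erasure: if [e] already occurs later in the walk, jump to its
   occurrence, entering it from whichever endpoint the rest of the walk uses. *)
Lemma walk_uniq x y p : walk ep x y p ->
  exists2 q, walk ep x y q & uniq q /\ {subset q <= p}.
Proof.
elim=> [a|a b c e p' He _ [q Hq [Uq Sq]]]; first by exists [::]; [exact: walk_nil|].
have sub_cons f : f \in q -> f \in e :: p' by rewrite inE => /Sq ->; rewrite orbT.
case Eq: (e \in q); last first.
  exists (e :: q); first exact: walk_cons He Hq.
  rewrite /= Eq Uq; split=> // f; rewrite inE => /orP[/eqP->|/sub_cons //].
  exact: mem_head.
move: Eq => /splitPr [q1 q2] in Hq Uq Sq sub_cons *.
have [u [v [Huv _ Hv]]] := walk_cat_inv Hq.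
move: Uq; rewrite cat_uniq /= => /and4P[_ _ Nq2 Uq2].
have Sq2 f : f \in q2 -> f \in e :: p' by move=> Hf; apply: sub_cons; rewrite mem_cat inE Hf !orbT.
have [Eva|Evc] : v = a \/ v = c.
  by case: He Huv => -> [] [] *; subst; auto.
- by rewrite Eva in Hv; exists q2.
- rewrite Evc in Hv; exists (e :: q2); first exact: walk_cons He Hv.
  rewrite /= Nq2 Uq2; split=> // f; rewrite inE => /orP[/eqP->|/Sq2 //].
  exact: mem_head.
Qed.

Lemma size_uniq_walk (q : seq E) : uniq q -> (size q <= #|E|)%N.
Proof. by move=> Uq; rewrite -(card_uniqP Uq) max_card. Qed.

End Walks.

Lemma sumr_uniq_sub_le (R : numDomainType) (T : eqType) (F : T -> R) (s p : seq T) :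
  (forall i, 0 <= F i) -> uniq s -> {subset s <= p} ->
  \sum_(i <- s) F i <= \sum_(i <- p) F i.
Proof.
move=> F0 Us sp; have [s' sub_s' Es] := (count_subseqP s p).1 (leq_uniq_count Us sp).
have [r Ep] := perm_to_subseq sub_s'.
by rewrite (perm_big _ Es) (perm_big _ Ep) big_cat lerDl sumr_ge0.
Qed.

Section WeightedDistance.
Variables (V E : finType) (ep : E -> V * V) (R : realType).
Implicit Types (w : E -> R) (p q : seq E).

Lemma path_weight_cat w p q :
  path_weight w (p ++ q) = path_weight w p + path_weight w q.
Proof. exact: big_cat. Qed.

Lemma path_weight_rev w p : path_weight w (rev p) = path_weight w p.
Proof. exact: big_rev. Qed.

Lemma path_weight_ge0 w p : nonneg_weight w -> 0 <= path_weight w p.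
Proof. by move=> w0; exact: sumr_ge0. Qed.

Lemma path_weight_le_size w (L : R) p :
  (forall e, w e <= L) -> path_weight w p <= (size p)%:R * L.
Proof.
move=> wL; rewrite -sum1_size natr_sum mulr_suml.
by apply: ler_sum => e _; rewrite mul1r.
Qed.

Lemma wdist_le_path_weight w x y p : nonneg_weight w -> walk ep x y p ->
  wdist ep w x y <= path_weight w p.
Proof.
move=> w0 Hp; apply: ge_inf; last by exists p.
by exists 0 => _ [q _ <-]; exact: path_weight_ge0.
Qed.

Lemma wdist_ge w x y (b : R) : gconnected ep x y ->
  (forall p, walk ep x y p -> b <= path_weight w p) -> b <= wdist ep w x y.
Proof.
move=> [p Hp] Hb; apply: lb_le_inf; first by exists (path_weight w p), p.
by move=> _ [q Hq <-]; exact: Hb.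
Qed.

(* [inf set0 = 0]. *)
Lemma wdist_disconnected w x y : ~ gconnected ep x y -> wdist ep w x y = 0.
Proof.
move=> nc; rewrite /wdist [X in inf X](_ : _ = set0) ?inf0 //.
by apply/seteqP; split=> // r [q Hq _]; case: nc; exists q.
Qed.

Lemma wdist_ge0 w x y : nonneg_weight w -> 0 <= wdist ep w x y.
Proof.
move=> w0; have [Hc|nc] := pselect (gconnected ep x y).
  by apply: wdist_ge => // q _; exact: path_weight_ge0.
by rewrite wdist_disconnected.
Qed.

Lemma wdist_le_card w (L : R) x y : 0 <= L -> nonneg_weight w -> (forall e, w e <= L) ->
  wdist ep w x y <= #|E|%:R * L.
Proof.
move=> L0 w0 wL; have [[p Hp]|nc] := pselect (gconnected ep x y); last first.
  by rewrite wdist_disconnected // mulr_ge0.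
have [q Hq [Uq _]] := walk_uniq Hp.
apply: le_trans (wdist_le_path_weight w0 Hq) (le_trans (path_weight_le_size _ wL) _).
by rewrite ler_wpM2r // ler_nat size_uniq_walk.
Qed.

Lemma wdist_le_neighboring w w' x y : nonneg_weight w -> nonneg_weight w' ->
  neighboring w w' -> wdist ep w x y <= wdist ep w' x y + 1.
Proof.
move=> w0 w'0 ww'; have [Hc|nc] := pselect (gconnected ep x y); last first.
  by rewrite !wdist_disconnected // add0r.
rewrite -lerBlDr; apply: wdist_ge => // p Hp; rewrite lerBlDr.
have [q Hq [Uq Sq]] := walk_uniq Hp.
apply: le_trans (wdist_le_path_weight w0 Hq) _.
have -> : path_weight w q = path_weight w' q + \sum_(e <- q) (w e - w' e).
  by rewrite /path_weight -big_split; apply: eq_bigr => e _ /=; rewrite addrCA subrr addr0.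
apply: lerD; first exact: sumr_uniq_sub_le.
apply: le_trans ww'; rewrite -big_enum /=.
apply: le_trans (sumr_uniq_sub_le _ Uq (fun e _ => mem_enum _ e)).
  by apply: ler_sum => e _; exact: ler_norm.
by move=> e; exact: normr_ge0.
Qed.

Lemma wdist_neighboring w w' x y : nonneg_weight w -> nonneg_weight w' ->
  neighboring w w' -> `|wdist ep w x y - wdist ep w' x y| <= 1.
Proof.
move=> w0 w'0 ww'; have w'w : neighboring w' w.
  by rewrite /neighboring; under eq_bigr do rewrite distrC.
have := wdist_le_neighboring x y w0 w'0 ww'; have := wdist_le_neighboring x y w'0 w0 w'w.
by rewrite ler_norml; lra.
Qed.

Lemma wdist_le_detour w (L : R) (k : nat) a a' b' b pa pb :
  0 <= L -> nonneg_weight w -> (forall e, w e <= L) -> gconnected ep a' b' ->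
  walk ep a a' pa -> (size pa <= k)%N -> walk ep b' b pb -> (size pb <= k)%N ->
  wdist ep w a b <= wdist ep w a' b' + 2 * (k%:R * L).
Proof.
move=> L0 w0 wL Hc Ha ka Hb kb.
have short p : (size p <= k)%N -> path_weight w p <= k%:R * L.
  move=> kp; apply: le_trans (path_weight_le_size _ wL) _.
  by rewrite ler_wpM2r // ler_nat.
rewrite -lerBlDr; apply: wdist_ge => // q Hq; rewrite lerBlDr.
apply: le_trans (wdist_le_path_weight w0 (walk_cat Ha (walk_cat Hq Hb))) _.
by rewrite !path_weight_cat; have := short _ ka; have := short _ kb; lra.
Qed.

Lemma wdist_cover_approx w (L : R) (k : nat) x y zx zy px py :
  0 <= L -> nonneg_weight w -> (forall e, w e <= L) -> gconnected ep x y ->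
  walk ep zx x px -> (size px <= k)%N -> walk ep zy y py -> (size py <= k)%N ->
  `|wdist ep w zx zy - wdist ep w x y| <= 2 * (k%:R * L).
Proof.
move=> L0 w0 wL [r Hr] Hx kx Hy ky.
have Hz : gconnected ep zx zy.
  by exists (px ++ r ++ rev py); apply: walk_cat Hx (walk_cat Hr (walk_rev Hy)).
have kx' : (size (rev px) <= k)%N by rewrite size_rev.
have ky' : (size (rev py) <= k)%N by rewrite size_rev.
have := wdist_le_detour L0 w0 wL (ex_intro _ r Hr) Hx kx (walk_rev Hy) ky'.
have := wdist_le_detour L0 w0 wL Hz (walk_rev Hx) kx' Hy ky.
by rewrite ler_norml; lra.
Qed.

End WeightedDistance.

Section CyclicNorm.
Variable n : nat.
Implicit Types a b : 'I_n.+1.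

Definition cnorm a : nat := minn a (n.+1 - a).

Lemma val_Zp_add a b :
  nat_of_ord (a + b)%R = (if (a + b < n.+1)%N then a + b else a + b - n.+1)%N.
Proof.
rewrite [LHS]/= /Zp_add /=; have := ltn_ord a; have := ltn_ord b.
case: ifP => H ha hb; first by rewrite modn_small.
by rewrite -[(a + b)%N](@subnK n.+1) ?modnDr ?modn_small; lia.
Qed.

Lemma val_Zp_opp a : nat_of_ord (- a)%R = (if a == 0 :> nat then 0 else n.+1 - a)%N.
Proof.
rewrite [LHS]/= /Zp_opp /=; have := ltn_ord a.
by case: eqP => [->|H] ha; rewrite ?subn0 ?modnn // modn_small; lia.
Qed.

Lemma cnormD a b : (cnorm (a + b)%R <= cnorm a + cnorm b)%N.
Proof.
rewrite /cnorm val_Zp_add; have := ltn_ord a; have := ltn_ord b.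
by case: ifP; lia.
Qed.

Lemma cnormB a b : (cnorm (a - b)%R <= (a - b) + (b - a))%N.
Proof.
rewrite /cnorm val_Zp_add val_Zp_opp; have := ltn_ord a; have := ltn_ord b.
by case: eqP; case: ifP; lia.
Qed.

(* Moving [t] steps towards [0] maps the elements of norm [> t] injectively
   to elements whose norm has dropped by exactly [t]. *)
Definition shift_to0 (t : nat) a : 'I_n.+1 :=
  if (2 * a <= n.+1)%N then inord (a - t) else inord (a + t).

Lemma cnorm_shift_to0 t a : (t < cnorm a)%N -> cnorm (shift_to0 t a) = (cnorm a - t)%N.
Proof.
rewrite /shift_to0 /cnorm => ta; have := ltn_ord a.
by case: ifP => ha an; rewrite inordK; lia.
Qed.

Lemma shift_to0_inj t : {in [pred a | (t < cnorm a)%N] &, injective (shift_to0 t)}.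
Proof.
move=> a b; rewrite !inE /shift_to0 /cnorm => Ha Hb /(congr1 (@nat_of_ord _)) Eab.
apply: ord_inj; move: Eab; have := ltn_ord a; have := ltn_ord b.
by case: ifP => ha; case: ifP => hb bn an; rewrite !inordK; lia.
Qed.

Lemma sum_expR_cnorm_tail (R : realType) (b : R) (t : nat) :
  \sum_(a | (t < cnorm a)%N) expR (- b * (cnorm a)%:R)
  <= expR (- b * t%:R) * \sum_a expR (- b * (cnorm a)%:R).
Proof.
rewrite (eq_bigr (fun a => expR (- b * t%:R) * expR (- b * (cnorm (shift_to0 t a))%:R))).
  rewrite -mulr_sumr ler_wpM2l ?expR_ge0 //.
  rewrite -(big_imset (fun a => expR (- b * (cnorm a)%:R)) (@shift_to0_inj t)) /=.
  by rewrite [X in _ <= X](bigID [in shift_to0 t @: [pred a | (t < cnorm a)%N]]) /= lerDl sumr_ge0.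
move=> a Ha; rewrite -expRD cnorm_shift_to0 // natrB 1?ltnW //; congr expR; ring.
Qed.

End CyclicNorm.

Section CyclicLaplace.
Variables (R : realType) (I : finType) (n : nat) (b : R).

Local Notation noise := {ffun I -> 'I_n.+1}.

Definition noise_norm (f : noise) : R := \sum_i (cnorm (f i))%:R.
Definition noise_weight (f : noise) : R := expR (- b * noise_norm f).
Definition noise_total : R := \sum_f noise_weight f.

(* The noise vector is drawn as its rank in [enum noise]: [nat] carries the
   discrete sigma-algebra, so every output of the mechanism is measurable. *)
Definition noise_of (k : nat) : noise := nth [ffun=> ord0] (enum noise) k.

Definition noise_mass :=
  msum (fun k => mscale (NngNum (expR_ge0 (- b * noise_norm (noise_of k)))) \d_k)
       #|noise|.

Definition noise_prob : probability nat R := mnormalize noise_mass \d_0%N.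

Lemma noise_ofK (f : noise) : noise_of (enum_rank f) = f.
Proof. exact: nth_enum_rank. Qed.

Lemma noise_total_gt0 : 0 < noise_total.
Proof.
rewrite /noise_total (bigD1 [ffun=> ord0]) //= ltr_pwDl ?expR_gt0 //.
by rewrite sumr_ge0 // => f _; exact: expR_ge0.
Qed.

Lemma noise_massE U :
  noise_mass U = (\sum_f noise_weight f * ((enum_rank f : nat) \in U)%:R)%:E.
Proof.
transitivity (\sum_(k < #|noise|) (noise_weight (noise_of k) * ((k : nat) \in U)%:R)%:E).
  by apply: eq_bigr => k _; rewrite /= /mscale /= diracE -EFinM.
rewrite sumEFin; congr EFin.
rewrite (reindex enum_rank) /=; last exact: onW_bij (enum_rank_bij _).
by apply: eq_bigr => f _; rewrite noise_ofK.
Qed.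

Lemma noise_probE U : noise_prob U =
  ((\sum_f noise_weight f * ((enum_rank f : nat) \in U)%:R) / noise_total)%:E.
Proof.
have massT : noise_mass [set: nat] = noise_total%:E.
  by rewrite noise_massE; congr EFin; apply: eq_bigr => f _; rewrite in_setT mulr1.
rewrite /noise_prob /= /mnormalize /= -/noise_mass massT ifF; last first.
  by apply/negbTE; rewrite negb_or eqe gt_eqF ?noise_total_gt0.
by rewrite noise_massE /= EFinM.
Qed.

(* Translating the noise by [r' - r] turns the output distribution at [r]
   into the one at [r'], changing each weight by at most
   [expR (b * noise_norm (r - r'))]. *)
Lemma noise_prob_shift (T : Type) (out : noise -> T) (S : set T) (r r' : noise) :
  0 <= b ->
  (noise_prob [set k | S (out (r + noise_of k)%R)] <=
   (expR (b * noise_norm (r - r')%R))%:E * noise_prob [set k | S (out (r' + noise_of k)%R)])%E.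
Proof.
move=> b0; rewrite !noise_probE -EFinM lee_fin mulrA ler_pM2r ?invr_gt0 ?noise_total_gt0 //.
have memE (r0 : noise) f : ((enum_rank f : nat) \in [set k | S (out (r0 + noise_of k))])
    = (out (r0 + f) \in S).
  by apply/idP/idP => /set_mem H; apply/mem_set; move: H; rewrite /= noise_ofK.
under eq_bigr do rewrite memE.
under [X in _ <= _ * X]eq_bigr do rewrite memE.
rewrite (reindex (fun g : noise => g - r)) /=; last first.
  by exists (fun f => f + r) => g _; [rewrite subrK | rewrite addrK].
rewrite [X in _ <= _ * X](reindex (fun g : noise => g - r')) /=; last first.
  by exists (fun f => f + r') => g _; [rewrite subrK | rewrite addrK].
rewrite mulr_sumr; apply: ler_sum => g _.
rewrite !(addrC _ (g - _)) !subrK mulrA ler_wpM2r // /noise_weight -expRD ler_expR.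
have : noise_norm (g - r') <= noise_norm (g - r) + noise_norm (r - r').
  rewrite /noise_norm -big_split /=; apply: ler_sum => i _.
  by rewrite -natrD ler_nat !ffunE -{1}(subrK (r i) (g i)) -addrA cnormD.
by move/(ler_wpM2l b0); lra.
Qed.

(* The weight factorizes over the coordinates, so the mass of
   [t < cnorm (f i0)] is the one-dimensional tail times the other factors. *)
Lemma noise_weight_tail (t : nat) (i0 : I) :
  \sum_f noise_weight f * (t < cnorm (f i0))%:R <= expR (- b * t%:R) * noise_total.
Proof.
pose e (j : 'I_n.+1) : R := expR (- b * (cnorm j)%:R).
pose F i j : R := e j * (if i == i0 then (t < cnorm j)%:R else 1).
have weightE f : noise_weight f = \prod_i e (f i).
  by rewrite /noise_weight /noise_norm mulr_sumr expR_sum.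
have -> : \sum_f noise_weight f * (t < cnorm (f i0))%:R = \prod_i \sum_j F i j.
  rewrite bigA_distr_bigA /=; apply: eq_bigr => f _.
  rewrite /F big_split /= weightE; congr (_ * _).
  by rewrite (bigD1 i0) //= eqxx big1 ?mulr1 // => i /negbTE ->.
have -> : noise_total = \prod_(i : I) \sum_j e j.
  by rewrite /noise_total bigA_distr_bigA /=; apply: eq_bigr => f _; exact: weightE.
rewrite (bigD1 i0) //= [X in _ <= _ * X](bigD1 i0) //= mulrA.
have -> : \prod_(i | i != i0) \sum_j F i j = \prod_(i | i != i0) \sum_j e j.
  by apply: eq_bigr => i /negbTE Hi; apply: eq_bigr => j _; rewrite /F Hi mulr1.
apply: ler_wpM2r; first by rewrite prodr_ge0 // => i _; rewrite sumr_ge0 // => j _; exact: expR_ge0.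
rewrite /F eqxx (eq_bigr (fun j => if (t < cnorm j)%N then e j else 0)).
  by rewrite -big_mkcond; exact: sum_expR_cnorm_tail.
by move=> j _; case: ifP; rewrite ?mulr1 ?mulr0.
Qed.

Lemma noise_prob_small_norm (U : set nat) (t : nat) :
  (forall f : noise, (forall i, (cnorm (f i) <= t)%N) -> U (enum_rank f)) ->
  ((1 - #|I|%:R * expR (- b * t%:R))%:E <= noise_prob U)%E.
Proof.
move=> HU; rewrite noise_probE lee_fin ler_pdivlMr ?noise_total_gt0 //.
apply: (@le_trans _ _ (\sum_f noise_weight f * (1 - \sum_i (t < cnorm (f i))%:R))).
  rewrite (eq_bigr (fun f => noise_weight f - \sum_i noise_weight f * (t < cnorm (f i))%:R)).
    rewrite sumrB exchange_big /= -/noise_total.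
    have : \sum_i \sum_f noise_weight f * (t < cnorm (f i))%:R
           <= #|I|%:R * (expR (- b * t%:R) * noise_total).
      rewrite -sum1_card natr_sum mulr_suml; apply: ler_sum => i _; rewrite mul1r.
      exact: noise_weight_tail.
    lra.
  by move=> f _; rewrite mulrBr mulr1 mulr_sumr.
apply: ler_sum => f _; apply: ler_wpM2l; first exact: expR_ge0.
have [/forallP small|] := boolP [forall i, (cnorm (f i) <= t)%N].
  rewrite big1 ?subr0 => [|i _]; last by rewrite ltnNge small.
  by have /mem_set -> := HU f small.
rewrite negb_forall => /existsP [i0]; rewrite -ltnNge => big_i0.
apply: (@le_trans _ _ 0); last by case: (_ \in _).
by rewrite subr_le0 (bigD1 i0) //= big_i0 lerDl sumr_ge0 // => i _; case: ltnP.
Qed.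

End CyclicLaplace.

Lemma truncn_dist (R : realType) (x y : R) : 0 <= x -> 0 <= y ->
  (((Num.truncn x - Num.truncn y) + (Num.truncn y - Num.truncn x))%N)%:R <= `|x - y| + 1.
Proof.
move=> x0 y0; have /andP[lex ltx] := truncn_itv x0; have /andP[ley lty] := truncn_itv y0.
have := ler_norm (x - y); have : y - x <= `|x - y| by rewrite distrC ler_norm.
move: lex ltx ley lty; rewrite -!natr1.
case: (leqP (Num.truncn y) (Num.truncn x)) => [le_yx|/ltnW le_xy].
  by rewrite (eqP (_ : Num.truncn y - Num.truncn x == 0)%N) ?subn_eq0 // addn0 natrB //; lra.
by rewrite (eqP (_ : Num.truncn x - Num.truncn y == 0)%N) ?subn_eq0 // add0n natrB //; lra.
Qed.

Lemma Zp_add_small_bounds n (a c : 'I_n.+1) (T t : nat) :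
  nat_of_ord a = (T + t)%N -> (T + 2 * t <= n)%N -> (cnorm c <= t)%N ->
  (T <= nat_of_ord (a + c)%R <= T + 2 * t)%N.
Proof. by rewrite val_Zp_add /cnorm => ->; have := ltn_ord c; case: ifP; lia. Qed.

Section QuantizedRelease.
Variables (R : realType) (I : finType) (n : nat) (b step : R) (t : nat).
Hypothesis step_gt0 : 0 < step.

(* The offset [t] keeps noise of cyclic norm at most [t] from wrapping
   around ['I_n.+1]. *)
Definition quantize (x : R) : nat := Num.truncn (x / step).

Definition encode (x : I -> R) : {ffun I -> 'I_n.+1} :=
  [ffun i => inord (minn (quantize (x i) + t) n)].

Definition decode (u : 'I_n.+1) : R := step * ((u : nat)%:R - t%:R).

Definition release (x : I -> R) (k : nat) : I -> R :=
  fun i => decode ((encode x + noise_of I n k) i).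

Lemma val_encode x i : nat_of_ord (encode x i) = minn (quantize (x i) + t) n.
Proof. by rewrite ffunE inordK // ltnS geq_minr. Qed.

Lemma cnorm_encodeB x x' i : 0 <= x i -> 0 <= x' i ->
  (cnorm (encode x i - encode x' i)%R)%:R <= `|x i - x' i| / step + 1.
Proof.
move=> x0 x'0; have q0 y : 0 <= y -> 0 <= y / step by move=> y0; exact: divr_ge0 y0 (ltW step_gt0).
apply: (@le_trans _ _ (`|x i / step - x' i / step| + 1)).
  apply: le_trans (truncn_dist (q0 _ x0) (q0 _ x'0)).
  rewrite ler_nat; apply: leq_trans (cnormB _ _) _; rewrite !val_encode.
  by rewrite /quantize; move: (Num.truncn _) (Num.truncn _) => u v; lia.
by rewrite -mulrBl normrM (@gtr0_norm _ step^-1) ?invr_gt0.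
Qed.

Lemma release_prob_le x x' (S : set (I -> R)) : 0 <= b ->
  (forall i, 0 <= x i) -> (forall i, 0 <= x' i) ->
  (noise_prob I n b (release x @^-1` S) <=
   (expR (b * \sum_i (`|x i - x' i| / step + 1)))%:E *
     noise_prob I n b (release x' @^-1` S))%E.
Proof.
move=> b0 x0 x'0.
apply: le_trans (noise_prob_shift (fun f i => decode (f i)) S (encode x) (encode x') b0) _.
rewrite lee_wpmul2r ?measure_ge0 // lee_fin ler_expR ler_wpM2l // /noise_norm.
by apply: ler_sum => i _; rewrite ffunE [X in _ + X]ffunE; exact: cnorm_encodeB.
Qed.

Lemma release_accurate x (U : set nat) :
  (forall i, 0 <= x i) -> (forall i, quantize (x i) + 2 * t <= n)%N ->
  (forall k, (forall i, `|release x k i - x i| <= step * t%:R + step) -> U k) ->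
  ((1 - #|I|%:R * expR (- b * t%:R))%:E <= noise_prob I n b U)%E.
Proof.
move=> x0 room HU; apply: noise_prob_small_norm => f small; apply: HU => i.
rewrite /release /decode noise_ofK ffunE.
have enc : nat_of_ord (encode x i) = (quantize (x i) + t)%N.
  by rewrite val_encode; apply/minn_idPl; apply: leq_trans (room i); lia.
have /andP[lov hiv] := Zp_add_small_bounds enc (room i) (small i).
move: (nat_of_ord (encode x i + f i)%R) lov hiv => v lov hiv.
have /andP[loq hiq] := truncn_itv (divr_ge0 (x0 i) (ltW step_gt0)).
rewrite -/(quantize (x i)) -natr1 ler_pdivlMr // ltr_pdivrMr // in loq hiq.
move: lov hiv; rewrite -!(ler_nat R) natrD natrM => /(ler_wpM2l (ltW step_gt0)) lov.
move=> /(ler_wpM2l (ltW step_gt0)) hiv.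
by rewrite ler_norml; apply/andP; split; lra.
Qed.
End QuantizedRelease.

Section NoiseScale.
Variables (R : realType) (eps L gam : R) (s : nat).
Hypotheses (eps_gt0 : 0 < eps) (L_gt0 : 0 < L) (gam_gt0 : 0 < gam) (gam_lt1 : gam < 1).

(* [L / (1 + L)] is at most [L] and [1]: the rounding error stays within the
   covering error, while each coordinate costs [qstep^-1 + 1] of privacy. *)
Definition qstep : R := L / (1 + L).
Definition noise_cost : R := (s ^ 2)%:R * (qstep^-1 + 1).
Definition noise_rate : R := eps / noise_cost.
Definition noise_shift : nat := (Num.truncn (noise_cost * ln ((s ^ 2)%:R / gam) / eps)).+1.

Lemma qstep_gt0 : 0 < qstep.
Proof. by rewrite divr_gt0 // addr_gt0. Qed.

Lemma qstep_le : qstep <= L.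
Proof. by rewrite ler_pdivrMr ?addr_gt0 // mulrDr mulr1 lerDl mulr_ge0 ?ltW. Qed.

Lemma qstep_le1 : qstep <= 1.
Proof. by rewrite ler_pdivrMr ?addr_gt0 // mul1r lerDr. Qed.

Lemma noise_cost_ge0 : 0 <= noise_cost.
Proof.
apply: mulr_ge0 (ler0n _ _) (addr_ge0 _ ler01).
by rewrite invr_ge0 ltW // qstep_gt0.
Qed.

Lemma noise_rate_ge0 : 0 <= noise_rate.
Proof. exact: divr_ge0 (ltW eps_gt0) noise_cost_ge0. Qed.

Lemma noise_rate_cost : noise_rate * noise_cost <= eps.
Proof.
have [->|nz] := eqVneq noise_cost 0; first by rewrite mulr0 ltW.
by rewrite divfK.
Qed.

Lemma noise_shift_failure : (s ^ 2)%:R * expR (- noise_rate * noise_shift%:R) <= gam.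
Proof.
have [->|s_gt0] := posnP s; first by rewrite exp0n // mul0r ltW.
have m_ge1 : 1 <= (s ^ 2)%:R :> R by rewrite ler1n expn_gt0 s_gt0.
have mg_gt1 : 1 < (s ^ 2)%:R / gam by rewrite ltr_pdivlMr // mul1r (lt_le_trans gam_lt1).
have cost_gt0 : 0 < noise_cost.
  by apply: mulr_gt0 (lt_le_trans ltr01 m_ge1) (addr_gt0 _ ltr01); rewrite invr_gt0 qstep_gt0.
have rate_shift : ln ((s ^ 2)%:R / gam) <= noise_rate * noise_shift%:R.
  have -> : ln ((s ^ 2)%:R / gam) = noise_rate * (noise_cost * ln ((s ^ 2)%:R / gam) / eps).
    by rewrite /noise_rate; field; rewrite !lt0r_neq0.
  by rewrite ler_wpM2l ?noise_rate_ge0 // ltW // truncnS_gt.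
have mg_gt0 : 0 < (s ^ 2)%:R / gam by apply: lt_trans mg_gt1.
rewrite -ler_pdivlMl ?(lt_le_trans ltr01) // [X in _ <= X]mulrC -invf_div.
rewrite -[X in _ <= X]lnK ?posrE ?invr_gt0 //.
by rewrite lnV ?posrE // ler_expR mulNr lerN2.
Qed.

Lemma noise_shift_error : (0 < s)%N ->
  qstep * noise_shift%:R + qstep + 2 * L <= 4 * (L + s%:R ^+ 2 / eps * ln (s%:R / gam)).
Proof.
move=> s_gt0; have s_ge1 : 1 <= s%:R :> R by rewrite ler1n.
have s_gt0' : 0 < s%:R :> R by rewrite ltr0n.
have sg : s%:R <= s%:R / gam by rewrite ler_pdivlMr // ler_piMr ?ltW.
have sg_gt0 : 0 < s%:R / gam by rewrite divr_gt0.
have lns_ge0 : 0 <= ln (s%:R / gam) by rewrite ln_ge0 // (le_trans s_ge1).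
have mE : (s ^ 2)%:R / gam = s%:R * (s%:R / gam) :> R by rewrite natrX expr2 mulrA.
have lnm : ln ((s ^ 2)%:R / gam) <= 2 * ln (s%:R / gam).
  by rewrite mE lnM ?posrE // mulr2n mulrDl mul1r lerD2r ler_ln ?posrE.
have lnm_ge0 : 0 <= ln ((s ^ 2)%:R / gam).
  by rewrite mE lnM ?posrE // addr_ge0 // ln_ge0.
pose X := noise_cost * ln ((s ^ 2)%:R / gam) / eps.
have shift_le : noise_shift%:R <= X + 1.
  rewrite -natr1 lerD2r truncn_le.
  exact: divr_ge0 (mulr_ge0 noise_cost_ge0 lnm_ge0) (ltW eps_gt0).
have qstepX : qstep * X = (s ^ 2)%:R * (1 + qstep) * ln ((s ^ 2)%:R / gam) / eps.
  by rewrite /X /noise_cost; field; rewrite !lt0r_neq0 ?qstep_gt0.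
have qX_le : qstep * X <= (2 * (s ^ 2)%:R) * (2 * ln (s%:R / gam) / eps).
  rewrite qstepX -mulrA; apply: ler_pM.
  - by rewrite mulr_ge0 // addr_ge0 // ltW // qstep_gt0.
  - exact: divr_ge0 lnm_ge0 (ltW eps_gt0).
  - by rewrite mulrC ler_wpM2r // -[2]/(1 + 1) lerD2l qstep_le1.
  - by rewrite ler_pM2r ?invr_gt0.
have E4 : (2 * (s ^ 2)%:R) * (2 * ln (s%:R / gam) / eps)
          = 4 * (s%:R ^+ 2 / eps * ln (s%:R / gam)) :> R by rewrite natrX; field; rewrite lt0r_neq0.
rewrite E4 in qX_le; have := ler_wpM2l (ltW qstep_gt0) shift_le; have := qstep_le.
move: qX_le; rewrite /X; lra.
Qed.
End NoiseScale.

Section CoverRelease.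
Variables (V E : finType) (ep : E -> V * V) (R : realType) (Z : {set V}) (center : V -> V).
Hypothesis center_in : forall v, center v \in Z.

Local Notation cover := {z : V | z \in Z}.

Definition center_pair (x y : V) : cover * cover :=
  (exist _ (center x) (center_in x), exist _ (center y) (center_in y)).

Definition center_dist (w : E -> R) (i : cover * cover) : R :=
  wdist ep w (val i.1) (val i.2).

Definition cover_release (n : nat) (step : R) (t : nat) (w : E -> R) (om : nat) (x y : V) : R :=
  release n step t (center_dist w) om (center_pair x y).

Lemma card_cover_pairs : #|{: cover * cover}| = (#|Z| ^ 2)%N.
Proof. by rewrite card_prod card_sig; congr (_ * _)%N; apply: eq_card. Qed.

Lemma cover_release_DP n (b step : R) t eps : 0 <= b -> 0 < step ->
  b * ((#|Z| ^ 2)%:R * (step^-1 + 1)) <= eps ->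
  edge_DP (noise_prob {: cover * cover} n b) (cover_release n step t) eps.
Proof.
move=> b0 step0 beps w w' w0 w'0 ww' S _.
pose S' := [set g : cover * cover -> R | S (fun x y => g (center_pair x y))].
have dist0 w1 : nonneg_weight w1 -> forall i, 0 <= center_dist w1 i.
  by move=> w10 i; exact: wdist_ge0.
apply: le_trans (release_prob_le _ t step0 S' b0 (dist0 _ w0) (dist0 _ w'0)) _.
rewrite lee_wpmul2r ?measure_ge0 // lee_fin ler_expR (le_trans _ beps) // ler_wpM2l //.
rewrite -card_cover_pairs -sum1_card natr_sum mulr_suml.
apply: ler_sum => i _; rewrite mul1r lerD2r ler_pdivrMr // mulVf ?lt0r_neq0 //.
exact: wdist_neighboring.
Qed.

Variable k : nat.
Hypothesis center_close : forall v, exists2 p, walk ep (center v) v p & (size p <= k)%N.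

Lemma cover_release_accurate n (b step : R) t (L : R) w (U : set nat) :
  0 < step -> 0 <= L -> (forall e, 0 <= w e <= L) ->
  (Num.truncn (#|E|%:R * L / step) + 2 * t <= n)%N ->
  (forall om, (forall x y, gconnected ep x y ->
     `|cover_release n step t w om x y - wdist ep w x y|
       <= step * t%:R + step + 2 * (k%:R * L)) -> U om) ->
  ((1 - (#|Z| ^ 2)%:R * expR (- b * t%:R))%:E <= noise_prob {: cover * cover} n b U)%E.
Proof.
move=> step0 L0 wL room HU; have w0 e : 0 <= w e by case/andP: (wL e).
have wle e : w e <= L by case/andP: (wL e).
rewrite -card_cover_pairs.
apply: (@release_accurate R _ n b step t step0 (center_dist w)) => [i|i|om acc].
- exact: wdist_ge0.
- apply: leq_trans room; rewrite leq_add2r; apply: le_truncn.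
  by rewrite ler_pM2r ?invr_gt0 //; exact: wdist_le_card.
- apply: HU => x y Hxy; have [px Hpx kx] := center_close x; have [py Hpy ky] := center_close y.
  have := wdist_cover_approx L0 w0 wle Hxy Hpx kx Hpy ky; have := acc (center_pair x y).
  by rewrite /cover_release /center_dist /= !ler_norml; lra.
Qed.

End CoverRelease.

Theorem theorem4p7 (R : realType) :
  exists C : R, 0 < C /\
  forall (V E : finType) (ep : E -> V * V) (eps Lambda gamma : R) (k : nat)
         (Z : {set V}),
    0 < eps -> 0 < Lambda -> (0 < k)%N -> 0 < gamma < 1 ->
    k_covering ep k Z ->
    exists (d : measure_display) (Omega : measurableType d)
           (P : probability Omega R) (A : (E -> R) -> Omega -> V -> V -> R),
      is_random_alg A /\ edge_DP P A eps /\
      forall w : E -> R, (forall e, 0 <= w e <= Lambda) ->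
        (P [set om | forall x y : V, gconnected ep x y ->
              (`|A w om x y - wdist ep w x y| <=
                C * (k%:R * Lambda + (#|Z|%:R ^+ 2 / eps) * ln (#|Z|%:R / gamma)))%R]
         >= (1 - gamma)%:E)%E.
Proof.
exists 4; split=> // V E ep eps Lam gam k Z eps0 Lam0 k0 /andP[gam0 gam1] cover.
have [center center_spec] : {center : V -> V & forall v, center v \in Z /\
    exists2 p, walk ep (center v) v p & (size p <= k)%N}.
  apply: (@choice _ _ (fun v z => z \in Z /\ exists2 p, walk ep z v p & (size p <= k)%N)).
  by move=> v; have [z zZ [p [Hp kp]]] := cover v; exists z; split=> //; exists p.
have center_in v := (center_spec v).1.
pose L := k%:R * Lam; have L0 : 0 < L by rewrite mulr_gt0 // ltr0n.
pose step := qstep L; pose b := noise_rate eps L #|Z|; pose t := noise_shift eps L gam #|Z|.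
pose n := (Num.truncn (#|E|%:R * Lam / step) + 2 * t)%N.
exists _, nat, (noise_prob {: {z : V | z \in Z} * {z : V | z \in Z}} n b).
exists (cover_release ep center_in n step t).
split; first by [].
split; first exact: cover_release_DP (noise_rate_ge0 _ eps0 L0) (qstep_gt0 L0) (noise_rate_cost _ _ _).
have center_close v := (center_spec v).2.
move=> w wL; apply: (le_trans _ (cover_release_accurate center_close b (qstep_gt0 L0) (ltW Lam0) wL (leqnn n) _)).
  by rewrite lee_fin lerD2l lerN2 noise_shift_failure.
move=> om acc x y Hxy; apply: le_trans (acc x y Hxy) _.
by apply: noise_shift_error => //; apply/card_gt0P; exists (center x).
Qed.
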